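(* Let $p,l$ be distinct odd primes, and let $\tilde\Gamma$, $\psi$ and $\Gamma=\psi(\tilde\Gamma)$ be as in the context. Elements $x,y\in\tilde\Gamma$ commute (as quaternions) if and only if their images $\psi(x),\psi(y)\in\Gamma$ commute.
   Context: Let $p,l$ be distinct odd primes. Let $\mathbb H(\mathbb Z)$ be the ring of quaternions $x=x_0+x_1i+x_2j+x_3k$ with $x_0,\dots,x_3\in\mathbb Z$, where $i^2=j^2=k^2=-1$, $ij=-ji=k$; write $\bar x=x_0-x_1i-x_2j-x_3k$ and $|x|^2=x\bar x=x_0^2+x_1^2+x_2^2+x_3^2$. Fix $c_p,d_p\in\mathbb Q_p$ with $c_p^2+d_p^2+1=0$ and $c_l,d_l\in\mathbb Q_l$ with $c_l^2+d_l^2+1=0$. Define $\psi:\mathbb H(\mathbb Z)\setminus\{0\}\to G:=PGL_2(\mathbb Q_p)\times PGL_2(\mathbb Q_l)$ by sending $x$ to the class of the pair $\left(\begin{pmatrix} x_0+x_1c_p+x_3d_p & -x_1d_p+x_2+x_3c_p\\ -x_1d_p-x_2+x_3c_p & x_0-x_1c_p-x_3d_p\end{pmatrix},\begin{pmatrix} x_0+x_1c_l+x_3d_l & -x_1d_l+x_2+x_3c_l\\ -x_1d_l-x_2+x_3c_l & x_0-x_1c_l-x_3d_l\end{pmatrix}\right)$. It is multiplicative. Let $\tilde\Gamma$ be the set of $x\in\mathbb H(\mathbb Z)$ such that $|x|^2=p^rl^s$ for some integers $r,s\ge 0$, and such that $x_0$ is odd and $x_1,x_2,x_3$ are even if $|x|^2\equiv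 1\pmod 4$, while $x_1$ is even and $x_0,x_2,x_3$ are odd if $|x|^2\equiv 3\pmod 4$. Then $\Gamma=\psi(\tilde\Gamma)$ is a torsion-free cocompact lattice in $G$. *)

From HB Require Import structures.
From mathcomp Require Import all_boot all_order all_algebra.
Set Implicit Arguments. Unset Strict Implicit. Unset Printing Implicit Defensive.
Import Order.TTheory GRing.Theory Num.Theory.
Local Open Scope ring_scope.

(* Integral quaternions x0 + x1 i + x2 j + x3 k, i^2=j^2=k^2=-1, ij=-ji=k. *)
Record quat := Quat { q0 : int; q1 : int; q2 : int; q3 : int }.

Definition qmul (x y : quat) : quat :=
  Quat (q0 x * q0 y - q1 x * q1 y - q2 x * q2 y - q3 x * q3 y)
       (q0 x * q1 y + q1 x * q0 y + q2 x * q3 y - q3 x * q2 y)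
       (q0 x * q2 y - q1 x * q3 y + q2 x * q0 y + q3 x * q1 y)
       (q0 x * q3 y + q1 x * q2 y - q2 x * q1 y + q3 x * q0 y).

Definition qnorm (x : quat) : int :=
  q0 x ^+ 2 + q1 x ^+ 2 + q2 x ^+ 2 + q3 x ^+ 2.

Definition zodd (z : int) : bool := ~~ (2 %| z)%Z.
Definition zeven (z : int) : bool := (2 %| z)%Z.

Definition in_Gamma_tilde (p l : nat) (x : quat) : Prop :=
  exists r s : nat,
    qnorm x = ((p ^ r * l ^ s)%N)%:Z /\
    (((p ^ r * l ^ s) %% 4 = 1)%N ->
       [&& zodd (q0 x), zeven (q1 x), zeven (q2 x) & zeven (q3 x)]) /\
    (((p ^ r * l ^ s) %% 4 = 3)%N ->
       [&& zeven (q1 x), zodd (q0 x), zodd (q2 x) & zodd (q3 x)]).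

(* The 2x2 matrix representing x over a field K, given c, d in K
   with c^2 + d^2 + 1 = 0 (one component of psi, before projectivising). *)
Definition psi_mat (K : fieldType) (c d : K) (x : quat) : 'M[K]_2 :=
  let x0 : K := (q0 x)%:~R in let x1 : K := (q1 x)%:~R in
  let x2 : K := (q2 x)%:~R in let x3 : K := (q3 x)%:~R in
  \matrix_(i < 2, j < 2)
    match nat_of_ord i, nat_of_ord j with
    | 0, 0 => x0 + x1 * c + x3 * d
    | 0, _ => - (x1 * d) + x2 + x3 * c
    | _, 0 => - (x1 * d) - x2 + x3 * c
    | _, _ => x0 - x1 * c - x3 * d
    end.

(* Two classes [A], [B] in PGL_2(K) commute iff AB = lambda BA for some
   lambda in K^x (literal unfolding of [A][B] = [B][A] in GL_2(K)/K^x). *)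
Definition pgl_commute (K : fieldType) (A B : 'M[K]_2) : Prop :=
  exists lambda : K, lambda != 0 /\ A *m B = lambda *: (B *m A).

Definition psi_commute (Kp Kl : fieldType) (cp dp : Kp) (cl dl : Kl)
  (x y : quat) : Prop :=
  pgl_commute (psi_mat cp dp x) (psi_mat cp dp y) /\
  pgl_commute (psi_mat cl dl x) (psi_mat cl dl y).

From mathcomp Require Import all_boot all_order all_algebra ring zify.
Set Implicit Arguments. Unset Strict Implicit. Unset Printing Implicit Defensive.
Import GRing.Theory Num.Theory.
Local Open Scope ring_scope.

(* In characteristic 0 the map psi_mat is multiplicative and injective, and
   det (psi_mat x) = |x|^2.  If psi(x) psi(y) = la psi(y) psi(x) in the first
   factor, then psi(xy) = la psi(yx), and taking determinants with
   |xy|^2 = |yx|^2 = |x|^2 |y|^2 <> 0 gives la^2 = 1.  For la = 1 injectivity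
   gives xy = yx.  For la = -1 it gives xy = -yx, so the real part of
   conj(x) (xy + yx), which is 2 y_0 |x|^2, vanishes; but y_0 is odd. *)

Definition qopp (x : quat) : quat := Quat (- q0 x) (- q1 x) (- q2 x) (- q3 x).

Lemma qnormM x y : qnorm (qmul x y) = qnorm x * qnorm y.
Proof. by rewrite /qnorm /=; ring. Qed.

Lemma qmul_anticomm_re x y : qmul x y = qopp (qmul y x) -> q0 y * qnorm x = 0.
Proof.
move=> xy_anti.
(* the real part of conj(x) * (x y + y x) *)
have re_conj : 2 * (q0 y * qnorm x) =
    q0 x * (q0 (qmul x y) + q0 (qmul y x)) + q1 x * (q1 (qmul x y) + q1 (qmul y x))
  + q2 x * (q2 (qmul x y) + q2 (qmul y x)) + q3 x * (q3 (qmul x y) + q3 (qmul y x)).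
  by rewrite /qnorm /=; ring.
move/eqP: re_conj; rewrite xy_anti /= !addNr !mulr0 !addr0 mulf_eq0 /=.
exact/eqP.
Qed.

Lemma pchar0_intr_eq0 (K : fieldType) : [pchar K] =i pred0 ->
  forall n : int, (n%:~R == 0 :> K) = (n == 0).
Proof.
move=> /pcharf0P natr_eq0 [] n; first by rewrite natr_eq0.
by rewrite NegzE mulrNz oppr_eq0 natr_eq0.
Qed.

Lemma pchar0_intr_inj (K : fieldType) : [pchar K] =i pred0 ->
  injective (intr : int -> K).
Proof.
move=> K0 m n /eqP; rewrite -subr_eq0 -rmorphB pchar0_intr_eq0 // subr_eq0.
by move/eqP.
Qed.

Section PsiMat.
Variables (K : fieldType) (c d : K).
Hypothesis cd_sum : c ^+ 2 + d ^+ 2 + 1 = 0.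

Let eq_mod_cd (k a b : K) : a - b = k * (c ^+ 2 + d ^+ 2 + 1) -> a = b.
Proof. by rewrite cd_sum mulr0 => /subr0_eq. Qed.

Lemma psi_matM x y : psi_mat c d x *m psi_mat c d y = psi_mat c d (qmul x y).
Proof.
case: x => x0 x1 x2 x3; case: y => y0 y1 y2 y3.
apply/matrixP=> i j; rewrite !mxE !big_ord_recl big_ord0 !mxE /=.
rewrite !(rmorphB, rmorphD, rmorphM) /=.
set X0 := (x0%:~R : K); set X1 := (x1%:~R : K); set X2 := (x2%:~R : K).
set X3 := (x3%:~R : K); set Y0 := (y0%:~R : K); set Y1 := (y1%:~R : K).
set Y2 := (y2%:~R : K); set Y3 := (y3%:~R : K).
case: i => [[|[|i]] Hi] //=; case: j => [[|[|j]] Hj] //=.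
- by apply: (eq_mod_cd (k := X1 * Y1 + X3 * Y3)); ring.
- by apply: (eq_mod_cd (k := X1 * Y3 - X3 * Y1)); ring.
- by apply: (eq_mod_cd (k := X3 * Y1 - X1 * Y3)); ring.
- by apply: (eq_mod_cd (k := X1 * Y1 + X3 * Y3)); ring.
Qed.

Lemma det_psi_mat x : \det (psi_mat c d x) = (qnorm x)%:~R.
Proof.
rewrite (expand_det_row _ ord0) !big_ord_recl big_ord0 /cofactor !det_mx11 !mxE /=.
rewrite /qnorm !(rmorphD, rmorphXn) /=.
apply: (eq_mod_cd (k := - ((q1 x)%:~R ^+ 2 + (q3 x)%:~R ^+ 2))).
by ring.
Qed.

Lemma psi_mat_commute x y :
  qmul x y = qmul y x -> pgl_commute (psi_mat c d x) (psi_mat c d y).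
Proof. by move=> xy; exists 1; rewrite oner_neq0 scale1r !psi_matM xy. Qed.

Lemma psi_matN x : psi_mat c d (qopp x) = - psi_mat c d x.
Proof.
apply/matrixP=> i j; rewrite !mxE /= !rmorphN /=.
by case: i => [[|[|i]] Hi] //=; case: j => [[|[|j]] Hj] //=; ring.
Qed.

Lemma psi_mat_coords x (M := psi_mat c d x) :
  [/\ 2 * (q0 x)%:~R = M 0 0 + M 1 1,
      2 * (q1 x)%:~R = d * (M 0 1 + M 1 0) - c * (M 0 0 - M 1 1),
      2 * (q2 x)%:~R = M 0 1 - M 1 0
    & 2 * (q3 x)%:~R = - d * (M 0 0 - M 1 1) - c * (M 0 1 + M 1 0)].
Proof.
rewrite /M !mxE /=; clear M; split; first by ring.
- by apply: (eq_mod_cd (k := 2 * (q1 x)%:~R)); ring.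
- by ring.
- by apply: (eq_mod_cd (k := 2 * (q3 x)%:~R)); ring.
Qed.

Hypothesis K_char0 : [pchar K] =i pred0.

Lemma psi_mat_inj : injective (psi_mat c d).
Proof.
have two_neq0 : (2 : K) != 0 by rewrite (pcharf0P _).1.
have coord_inj (m n : int) : 2 * m%:~R = 2 * n%:~R :> K -> m = n.
  by move/(mulfI two_neq0)/(pchar0_intr_inj K_char0).
move=> [a0 a1 a2 a3] [b0 b1 b2 b3] ab.
have [/= ea0 ea1 ea2 ea3] := psi_mat_coords (Quat a0 a1 a2 a3).
have [/= eb0 eb1 eb2 eb3] := psi_mat_coords (Quat b0 b1 b2 b3).
rewrite ab -{}eb0 -{}eb1 -{}eb2 -{}eb3 in ea0 ea1 ea2 ea3.
by rewrite (coord_inj _ _ ea0) (coord_inj _ _ ea1) (coord_inj _ _ ea2) (coord_inj _ _ ea3).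
Qed.

Lemma psi_mat_scale_sqr1 a b la :
  qnorm a = qnorm b -> qnorm b != 0 ->
  psi_mat c d a = la *: psi_mat c d b -> la ^+ 2 = 1.
Proof.
move=> Nab Nb_neq0 /(congr1 determinant); rewrite detZ !det_psi_mat Nab.
have NbK_neq0 : (qnorm b)%:~R != 0 :> K by rewrite pchar0_intr_eq0.
by rewrite -{1}[_%:~R]mul1r => /(mulIf NbK_neq0).
Qed.
End PsiMat.

Lemma in_Gamma_tilde_qnorm_neq0 (p l : nat) x :
  (0 < p)%N -> (0 < l)%N -> in_Gamma_tilde p l x -> qnorm x != 0.
Proof.
move=> p_gt0 l_gt0 [r [s [-> _]]].
by rewrite -[0]/(0%N%:Z) eqz_nat -lt0n muln_gt0 !expn_gt0 p_gt0 l_gt0.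
Qed.

Lemma in_Gamma_tilde_q0_odd (p l : nat) x :
  odd p -> odd l -> in_Gamma_tilde p l x -> zodd (q0 x).
Proof.
move=> p_odd l_odd [r [s [_ [mod1 mod3]]]].
set N := (p ^ r * l ^ s)%N in mod1 mod3.
have N_odd : odd N by rewrite oddM !oddX p_odd l_odd !orbT.
have N_mod4 : (N %% 4 = 1 \/ N %% 4 = 3)%N.
  by move: (modn2 N); rewrite N_odd; lia.
by case: N_mod4 => [/mod1 | /mod3] /and4P[].
Qed.

Theorem lemma2p1 (p l : nat) (Kp Kl : fieldType)
  (cp dp : Kp) (cl dl : Kl) :
  prime p -> prime l -> odd p -> odd l -> p != l ->
  [pchar Kp] =i pred0 -> [pchar Kl] =i pred0 ->
  cp ^+ 2 + dp ^+ 2 + 1 = 0 -> cl ^+ 2 + dl ^+ 2 + 1 = 0 ->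
  forall x y : quat, in_Gamma_tilde p l x -> in_Gamma_tilde p l y ->
  (qmul x y = qmul y x <-> psi_commute cp dp cl dl x y).
Proof.
move=> p_pr l_pr p_odd l_odd _ Kp0 _ cdp cdl x y x_in y_in; split.
  by move=> xy; split; apply: psi_mat_commute.
case=> -[la [_ xy_la_yx]] _; rewrite !(psi_matM cdp) in xy_la_yx.
have Nx_neq0 := in_Gamma_tilde_qnorm_neq0 (prime_gt0 p_pr) (prime_gt0 l_pr) x_in.
have Ny_neq0 := in_Gamma_tilde_qnorm_neq0 (prime_gt0 p_pr) (prime_gt0 l_pr) y_in.
have y0_neq0 : q0 y != 0.
  by apply: contraTneq (in_Gamma_tilde_q0_odd p_odd l_odd y_in) => ->.
have Nxy_yx : qnorm (qmul x y) = qnorm (qmul y x) by rewrite !qnormM mulrC.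
have Nyx_neq0 : qnorm (qmul y x) != 0 by rewrite qnormM mulf_neq0.
have /eqP := psi_mat_scale_sqr1 cdp Kp0 Nxy_yx Nyx_neq0 xy_la_yx.
rewrite sqrf_eq1 => /orP[] /eqP la_pm1.
  by apply: (psi_mat_inj cdp Kp0); rewrite xy_la_yx la_pm1 scale1r.
have xy_anti : qmul x y = qopp (qmul y x).
  by apply: (psi_mat_inj cdp Kp0); rewrite xy_la_yx la_pm1 scaleN1r psi_matN.
by have := mulf_neq0 y0_neq0 Nx_neq0; rewrite (qmul_anticomm_re xy_anti) eqxx.
Qed.
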